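(* Let $n\in\mathbb N$ and let $f$ be extremal for $M_n$ with $f(0)=e^{-t}$, $t>0$, written as $f(z)=\exp\big(-\sum_{j=1}^N\lambda_j\frac{1+\alpha_jz}{1-\alpha_jz}\big)$ with $\alpha_j=e^{-i\theta_j}$. Let $\varphi(\theta)=-i\lim_{r\to1^-}\log f(re^{i\theta})$ (logarithm real at $0$), defined for $\theta\notin\{\theta_1,\dots,\theta_N\}$, so that $f(e^{i\theta})=e^{i\varphi(\theta)}$ a.e. If $\mu_1,\dots,\mu_N$ denote the zeros of $\varphi$ in $[0,2\pi)$, then \[\varphi(\theta)=t\,\frac{\prod_{j=1}^N\sin\big(\frac{\theta-\mu_j}{2}\big)}{\prod_{j=1}^N\sin\big(\frac{\theta-\theta_j}{2}\big)}.\]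
   Context: $\mathbb D$ is the open unit disc; $\mathcal B_0=\{f$ holomorphic on $\mathbb D: 0<|f|\le1\}$; $M_n(f)=\mathrm{Re}\,a_n$; $f\in\mathcal B_0$ is extremal for $M_n$ if $M_n(f)\ge M_n(F)$ for all $F\in\mathcal B_0$. It is known that an extremal $f$ with $f(0)>0$ has the displayed form with $1\le N\le n$, $\lambda_j>0$, distinct $\alpha_j\in\partial\mathbb D$; explicitly $\varphi(\theta)=-\sum_{j=1}^N\lambda_j\cot\big(\frac{\theta-\theta_j}{2}\big)$, which has exactly $N$ zeros in $[0,2\pi)$. *)

From Stdlib Require Import Reals.
From Coquelicot Require Import Coquelicot.

Open Scope R_scope.

Notation CC := Complex.C.

Definition cexp (z : CC) : CC :=
  (exp (fst z) * cos (snd z), exp (fst z) * sin (snd z)).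

Fixpoint csum (N : nat) (g : nat -> CC) : CC :=
  match N with
  | O => RtoC 0
  | S k => Cplus (csum k g) (g k)
  end.

Fixpoint rprod (N : nat) (g : nat -> R) : R :=
  match N with
  | O => 1
  | S k => rprod k g * g k
  end.

Definition holo_disc (f : CC -> CC) : Prop :=
  forall z : CC, Cmod z < 1 -> @ex_derive C_AbsRing C_NormedModule f z.

Definition B0 (f : CC -> CC) : Prop :=
  holo_disc f /\ forall z : CC, Cmod z < 1 -> 0 < Cmod (f z) /\ Cmod (f z) <= 1.

Definition taylor_coeffs (f : CC -> CC) (a : nat -> CC) : Prop :=
  forall z : CC, Cmod z < 1 -> @is_pseries C_AbsRing C_NormedModule a z (f z).

(* M_n(f) = Re a_n ; f is extremal for M_n *)
Definition extremal (n : nat) (f : CC -> CC) : Prop :=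
  B0 f /\
  exists a : nat -> CC, taylor_coeffs f a /\
    forall (F : CC -> CC) (b : nat -> CC), B0 F -> taylor_coeffs F b ->
      fst (b n) <= fst (a n).

Definition alpha (theta : nat -> R) (j : nat) : CC := cexp (RtoC 0 - Ci * RtoC (theta j))%C.

(* the branch of log f that is real at 0:
   L(z) = - sum_j lambda_j (1 + alpha_j z)/(1 - alpha_j z) *)
Definition logf (N : nat) (lam theta : nat -> R) (z : CC) : CC :=
  (RtoC 0 - csum N (fun j => RtoC (lam j) *
       ((RtoC 1 + alpha theta j * z) / (RtoC 1 - alpha theta j * z))))%C.

Definition phi_is (N : nat) (lam theta : nat -> R) (th v : R) : Prop :=
  filterlim (fun r : R =>
      (RtoC 0 - Ci * logf N lam theta (RtoC r * cexp (Ci * RtoC th)))%C)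
    (at_left 1) (locally (RtoC v)).

(* For 0 <= r < 1,
     -i log f(r e^{i th}) = - sum_j lam_j Q_r(th - th_j) + i sum_j lam_j P_r(th - th_j),
   where P_r and Q_r are the Poisson kernel and its conjugate.  As r -> 1 the imaginary part tends
   to 0 away from the th_j and blows up at them, so the th_j are not zeros of phi and elsewhere
   phi(th) = - sum_j lam_j cot((th - th_j)/2).

   Clearing denominators, the numerator c(th) = - phi(th) prod_k sin((th - th_k)/2) satisfies
     prod_k 2i e^{i(th + th_k)/2} c(th) = i p(e^{i th}),
     p = sum_j lam_j (X + e^{i th_j}) prod_{k <> j} (X - e^{i th_k}),
   a polynomial of degree N with leading coefficient sum_j lam_j = t.  The N zeros mu_j of phi
   give N distinct roots e^{i mu_j} of p, so p = t prod_j (X - e^{i mu_j}).  Translating back,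
     phi(th) prod_k sin((th - th_k)/2) = - i t e^{i psi} prod_j sin((th - mu_j)/2)
   with the constant phase psi = sum_j (mu_j - th_j)/2.  The left side is real, so cos psi = 0,
   and comparing signs at th_0, where only the j = 0 term of c survives, gives sin psi = 1. *)

From Stdlib Require Import Reals Lra Lia.
From Coquelicot Require Import Coquelicot.
From mathcomp Require ssreflect ssrfun ssrbool eqtype ssrnat seq fintype bigop.
From mathcomp Require ssralg ssrnum poly Rstruct complex ring.

Open Scope R_scope.

Fixpoint rsum (N : nat) (g : nat -> R) : R :=
  match N with O => 0 | S k => rsum k g + g k end.

Lemma rsum_ext N f g : (forall j, (j < N)%nat -> f j = g j) -> rsum N f = rsum N g.
Proof. induction N; intros H; simpl; [reflexivity|]. rewrite IHN, H; auto. Qed.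

Lemma rsum_eq0 N f : (forall j, (j < N)%nat -> f j = 0) -> rsum N f = 0.
Proof. intros H. rewrite (rsum_ext N f (fun _ => 0)) by auto. clear H. induction N; simpl; lra. Qed.

Lemma rsum_nonneg N f : (forall j, (j < N)%nat -> 0 <= f j) -> 0 <= rsum N f.
Proof.
  induction N; intros H; simpl; [lra|].
  assert (0 <= rsum N f) by (apply IHN; auto). assert (0 <= f N) by auto. lra.
Qed.

Lemma rsum_ge_term N f k : (forall j, (j < N)%nat -> 0 <= f j) -> (k < N)%nat -> f k <= rsum N f.
Proof.
  induction N; intros H Hk; [lia|]. simpl.
  assert (0 <= rsum N f) by (apply rsum_nonneg; auto).
  assert (0 <= f N) by auto.
  destruct (Nat.eq_dec k N) as [->|Hne]; [lra|].
  assert (f k <= rsum N f) by (apply IHN; auto; lia). lra.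
Qed.

Lemma continuous_rsum N (F : nat -> R -> R) x :
  (forall j, (j < N)%nat -> continuous (F j) x) -> continuous (fun r => rsum N (fun j => F j r)) x.
Proof.
  induction N; intros H; simpl.
  - apply continuous_const.
  - apply (continuous_plus (fun r => rsum N (fun j => F j r)) (F N)); auto.
Qed.

Lemma rprod_neq0 N g : (forall j, (j < N)%nat -> g j <> 0) -> rprod N g <> 0.
Proof.
  induction N; intros H; simpl; [lra|].
  apply Rmult_integral_contrapositive_currified; auto.
Qed.

Lemma rprod_neg_sign N g : (forall j, (j < N)%nat -> g j < 0) -> 0 < (-1) ^ N * rprod N g.
Proof.
  induction N; intros H; simpl; [lra|].
  assert (0 < (-1) ^ N * rprod N g) by auto. assert (g N < 0) by auto. nra.
Qed.

Lemma csum_pair N g : csum N g = (rsum N (fun j => fst (g j)), rsum N (fun j => snd (g j))).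
Proof. induction N; simpl; [reflexivity|]. rewrite IHN. reflexivity. Qed.

Lemma csum_ext N f g : (forall j, (j < N)%nat -> f j = g j) -> csum N f = csum N g.
Proof. induction N; intros H; simpl; [reflexivity|]. rewrite IHN, H; auto. Qed.

Lemma csum_RtoC N g : csum N (fun j => RtoC (g j)) = RtoC (rsum N g).
Proof. rewrite csum_pair. unfold RtoC; simpl. f_equal. induction N; simpl; lra. Qed.

Lemma half_angle x :
  cos x = 1 - 2 * sin (x / 2) * sin (x / 2) /\ sin x = 2 * sin (x / 2) * cos (x / 2).
Proof.
  pose proof (cos_2a_sin (x / 2)) as Hc. pose proof (sin_2a (x / 2)) as Hs.
  replace (2 * (x / 2)) with x in Hc, Hs by field. split; lra.
Qed.

Lemma cexp_i th : cexp (Ci * RtoC th) = (cos th, sin th).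
Proof.
  unfold cexp; simpl.
  replace (0 * th - 1 * 0) with 0 by ring. replace (0 * 0 + 1 * th) with th by ring.
  rewrite exp_0. f_equal; ring.
Qed.

Lemma cexp_RtoC x : cexp (RtoC x) = RtoC (exp x).
Proof. unfold cexp, RtoC; simpl. rewrite cos_0, sin_0. f_equal; ring. Qed.

Lemma sin_half_sub_eq0 a b : cos a = cos b -> sin a = sin b -> sin ((a - b) / 2) = 0.
Proof.
  intros Hc Hs. pose proof (sin2_cos2 b) as E. unfold Rsqr in E.
  destruct (half_angle (a - b)) as [Hh _]. rewrite cos_minus, Hc, Hs in Hh.
  assert (sin ((a - b) / 2) * sin ((a - b) / 2) = 0) by lra.
  destruct (Rmult_integral _ _ H); assumption.
Qed.

Lemma sin_half_sub_eq0_cexp a b : sin ((a - b) / 2) = 0 -> cexp (Ci * RtoC a) = cexp (Ci * RtoC b).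
Proof.
  intros Hs. rewrite !cexp_i.
  replace a with (b + 2 * ((a - b) / 2)) by field.
  rewrite cos_plus, sin_plus, cos_2a_sin, sin_2a, Hs. f_equal; ring.
Qed.

Lemma sin_eq_0_window y : - PI < y < PI -> sin y = 0 -> y = 0.
Proof.
  intros Hy Hs. destruct (Rtotal_order y 0) as [Hlt|[Heq|Hgt]]; auto.
  - assert (sin y < 0) by (apply sin_lt_0_var; lra). lra.
  - assert (0 < sin y) by (apply sin_gt_0; lra). lra.
Qed.

Lemma eq_of_sin_half_sub_window a b c :
  c <= a < c + 2 * PI -> c <= b < c + 2 * PI -> sin ((a - b) / 2) = 0 -> a = b.
Proof. intros Ha Hb Hs. apply sin_eq_0_window in Hs; lra. Qed.

Lemma sin_half_sub_window_neg a c : c < a < c + 2 * PI -> sin ((c - a) / 2) < 0.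
Proof. intros Ha. apply sin_lt_0_var; lra. Qed.

(** * Boundary values of log f *)

Definition polar (r x : R) : CC := (r * cos x, r * sin x).

Lemma alpha_mul_polar theta j r th :
  (alpha theta j * (RtoC r * cexp (Ci * RtoC th)))%C = polar r (th - theta j).
Proof.
  rewrite cexp_i. unfold alpha, cexp. simpl.
  replace (0 + - (0 * theta j - 1 * 0)) with 0 by ring.
  replace (0 + - (0 * 0 + 1 * theta j)) with (- theta j) by ring.
  unfold polar. rewrite exp_0, cos_neg, sin_neg, cos_minus, sin_minus.
  unfold Cmult, RtoC; simpl. f_equal; ring.
Qed.

Definition poisson_den (r x : R) := 1 - 2 * r * cos x + r * r.
Definition poisson (r x : R) := (1 - r * r) / poisson_den r x.
Definition conj_poisson (r x : R) := 2 * r * sin x / poisson_den r x.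

Lemma poisson_den_pos r x : 0 <= r < 1 -> 0 < poisson_den r x.
Proof. intros Hr. unfold poisson_den. pose proof (COS_bound x). nra. Qed.

Lemma cayley_polar r x : poisson_den r x <> 0 ->
  ((RtoC 1 + polar r x) / (RtoC 1 - polar r x))%C =
  (poisson r x, conj_poisson r x).
Proof.
  intros Hd. pose proof (sin2_cos2 x) as Hsc. unfold Rsqr in Hsc.
  unfold poisson, conj_poisson, polar, Cdiv, Cinv, Cminus, Cplus, Copp, Cmult, RtoC; simpl.
  set (d := _ * (_ * 1) + _ * (_ * 1)).
  replace d with (poisson_den r x) by (unfold d, poisson_den; nra).
  replace (1 - r * r) with (1 - r * r * (sin x * sin x + cos x * cos x)) by (rewrite Hsc; ring).
  f_equal; field; exact Hd.
Qed.

Lemma boundary_value N lam theta th r :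
  (forall j, (j < N)%nat -> poisson_den r (th - theta j) <> 0) ->
  (RtoC 0 - Ci * logf N lam theta (RtoC r * cexp (Ci * RtoC th)))%C =
  (- rsum N (fun j => lam j * conj_poisson r (th - theta j)),
   rsum N (fun j => lam j * poisson r (th - theta j))).
Proof.
  intros Hd. unfold logf. rewrite csum_pair.
  rewrite (rsum_ext N _ (fun j => lam j * poisson r (th - theta j))),
    (rsum_ext N (fun j => snd _) (fun j => lam j * conj_poisson r (th - theta j))).
  - unfold Cminus, Cplus, Copp, Cmult, RtoC; simpl. f_equal; ring.
  - intros j Hj. rewrite alpha_mul_polar, cayley_polar by auto. simpl. ring.
  - intros j Hj. rewrite alpha_mul_polar, cayley_polar by auto. simpl. ring.
Qed.

Lemma logf_at_0 N lam theta : logf N lam theta (RtoC 0) = RtoC (- rsum N lam).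
Proof.
  unfold logf. rewrite (csum_ext N _ (fun j => RtoC (lam j))), csum_RtoC.
  - unfold Cminus, Cplus, Copp, RtoC; simpl. f_equal; ring.
  - intros j _. rewrite Cmult_0_r.
    unfold Cdiv, Cinv, Cminus, Cplus, Copp, Cmult, RtoC; simpl. f_equal; field.
Qed.

Lemma sum_weights_eq N lam theta (f : CC -> CC) t :
  (forall z : CC, Cmod z < 1 -> f z = cexp (logf N lam theta z)) ->
  f (RtoC 0) = RtoC (exp (- t)) -> t = rsum N lam.
Proof.
  intros Hf Hf0.
  rewrite Hf, logf_at_0, cexp_RtoC in Hf0 by (rewrite Cmod_0; lra).
  injection Hf0 as E. apply exp_inv in E. lra.
Qed.

Lemma poisson_1 x : poisson 1 x = 0.
Proof. unfold poisson, Rdiv. ring. Qed.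

Lemma poisson_den_1 x : poisson_den 1 x = 4 * sin (x / 2) * sin (x / 2).
Proof. unfold poisson_den. destruct (half_angle x) as [Hc _]. rewrite Hc. ring. Qed.

Lemma conj_poisson_1 x : sin (x / 2) <> 0 -> conj_poisson 1 x = cos (x / 2) / sin (x / 2).
Proof.
  intros Hs. unfold conj_poisson. rewrite poisson_den_1. destruct (half_angle x) as [_ Hsin].
  rewrite Hsin. field. exact Hs.
Qed.

Lemma poisson_nonneg r x : 0 <= r < 1 -> 0 <= poisson r x.
Proof.
  intros Hr. unfold poisson. apply Rdiv_le_0_compat; [nra | apply poisson_den_pos; exact Hr].
Qed.

Lemma poisson_ge_1 r x : 0 <= r < 1 -> cos x = 1 -> 1 <= poisson r x.
Proof.
  intros Hr Hc. unfold poisson, poisson_den. rewrite Hc.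
  replace (1 - 2 * r * 1 + r * r) with ((1 - r) * (1 - r)) by ring.
  apply Rcomplements.Rle_div_r; nra.
Qed.

Lemma at_left_1_unit : at_left 1 (fun r => 0 <= r < 1).
Proof.
  exists (mkposreal 1 Rlt_0_1). intros r Hr Hlt. simpl in Hr.
  change (Rabs (r - 1) < 1) in Hr. apply Rabs_def2 in Hr. lra.
Qed.

Lemma filterlim_C_pair {T} {F : (T -> Prop) -> Prop} {FF : Filter F} (A B : T -> R) a b :
  filterlim A F (locally a) -> filterlim B F (locally b) ->
  filterlim (fun x => (A x, B x) : CC) F (locally ((a, b) : CC)).
Proof.
  intros HA HB. apply filterlim_locally. intros eps.
  apply filterlim_locally with (eps := eps) in HA.
  apply filterlim_locally with (eps := eps) in HB.
  generalize (filter_and _ _ HA HB). apply filter_imp. intros x [H1 H2]. split; assumption.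
Qed.

Definition cot_sum N (lam theta : nat -> R) th :=
  rsum N (fun j => lam j * (cos ((th - theta j) / 2) / sin ((th - theta j) / 2))).

Lemma phi_cot_sum N lam theta th :
  (forall j, (j < N)%nat -> sin ((th - theta j) / 2) <> 0) ->
  phi_is N lam theta th (- cot_sum N lam theta th).
Proof.
  intros Hs.
  set (A r := - rsum N (fun j => lam j * conj_poisson r (th - theta j))).
  set (B r := rsum N (fun j => lam j * poisson r (th - theta j))).
  assert (Hd1 : forall j, (j < N)%nat -> poisson_den 1 (th - theta j) <> 0).
  { intros j Hj. rewrite poisson_den_1.
    pose proof (Rmult_integral_contrapositive_currified _ _ (Hs j Hj) (Hs j Hj)). lra. }
  assert (HA : continuous A 1).
  { apply (continuous_opp (fun r => rsum N (fun j => lam j * conj_poisson r (th - theta j)))).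
    apply (continuous_rsum N (fun j r => lam j * conj_poisson r (th - theta j))). intros j Hj.
    apply (@ex_derive_continuous R_AbsRing R_NormedModule).
    specialize (Hd1 j Hj). unfold conj_poisson, poisson_den in *. auto_derive. exact Hd1. }
  assert (HB : continuous B 1).
  { apply (continuous_rsum N (fun j r => lam j * poisson r (th - theta j))). intros j Hj.
    apply (@ex_derive_continuous R_AbsRing R_NormedModule).
    specialize (Hd1 j Hj). unfold poisson, poisson_den in *. auto_derive. exact Hd1. }
  assert (HA1 : A 1 = - cot_sum N lam theta th).
  { unfold A, cot_sum. f_equal. apply rsum_ext. intros j Hj. rewrite conj_poisson_1; auto. }
  assert (HB1 : B 1 = 0).
  { apply rsum_eq0. intros j _. rewrite poisson_1. ring. }
  unfold phi_is. apply (filterlim_ext_loc (fun r => (A r, B r) : CC)).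
  - generalize at_left_1_unit. apply filter_imp. intros r Hr. symmetry.
    apply boundary_value. intros j _. apply Rgt_not_eq, poisson_den_pos, Hr.
  - unfold RtoC. rewrite <- HA1, <- HB1.
    apply filterlim_C_pair; apply (filterlim_filter_le_1 (F := locally 1)); auto;
      apply filter_le_within.
Qed.

Lemma phi_undefined_at_pole N lam theta th k v :
  (k < N)%nat -> (forall j, (j < N)%nat -> 0 < lam j) -> sin ((th - theta k) / 2) = 0 ->
  ~ phi_is N lam theta th v.
Proof.
  intros Hk Hl Hs H. unfold phi_is in H.
  apply filterlim_locally with (eps := mkposreal (lam k) (Hl k Hk)) in H.
  destruct (filter_ex _ (filter_and _ _ H at_left_1_unit)) as [r [Hball Hr]].
  rewrite boundary_value in Hball by (intros; apply Rgt_not_eq, poisson_den_pos, Hr).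
  set (B := rsum N (fun j => lam j * poisson r (th - theta j))) in Hball.
  destruct Hball as [_ Hball]. change (Rabs (B - 0) < lam k) in Hball.
  assert (Hge : lam k * poisson r (th - theta k) <= B).
  { apply (rsum_ge_term N (fun j => lam j * poisson r (th - theta j))); auto.
    intros j Hj. apply Rmult_le_pos; [apply Rlt_le; auto | apply poisson_nonneg, Hr]. }
  assert (H1 : 1 <= poisson r (th - theta k)).
  { apply poisson_ge_1; [exact Hr|].
    destruct (half_angle (th - theta k)) as [Hc _]. rewrite Hc, Hs. ring. }
  pose proof (Hl k Hk). apply Rabs_def2 in Hball. nra.
Qed.

Lemma phi_unique N lam theta th v w : phi_is N lam theta th v -> phi_is N lam theta th w -> v = w.
Proof.
  intros H1 H2. injection (filterlim_locally_unique (F := at_left 1) _ _ _ H1 H2). auto.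
Qed.

(** * The cotangent sum as a polynomial in e^{i th} *)

Definition sin_prod N (g : nat -> R) th := rprod N (fun j => sin ((th - g j) / 2)).

Definition cot_numer N (lam theta : nat -> R) th :=
  rsum N (fun j => lam j * rprod N (fun k =>
    if Nat.eqb k j then cos ((th - theta k) / 2) else sin ((th - theta k) / 2))).

(* Inside the module below [/] and [2] denote ring operations, so half-angles enter it only
   through [midpoint] and the equations proved here. *)
Definition midpoint (a b : R) := (a + b) / 2.

Lemma midpoint_split a b : a = midpoint a b + (a - b) / 2 /\ b = midpoint a b - (a - b) / 2.
Proof. unfold midpoint. split; field. Qed.

Lemma midpoint_shift th a m : midpoint th m = (m - a) / 2 + midpoint th a.
Proof. unfold midpoint. field. Qed.

Lemma half_sub_diag x : (x - x) / 2 = 0.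
Proof. field. Qed.

Module CotangentPolynomial.
Import Rstruct ssreflect ssrfun ssrbool eqtype ssrnat seq fintype bigop.
Import ssralg ssrnum poly complex ring.
Import GRing.Theory Num.Theory.

Section Algebra.
Local Open Scope ring_scope.
Local Open Scope complex_scope.

Definition expi (a : R) : R[i] := (cos a +i* sin a)%C.

Lemma expiD a b : expi (a + b) = expi a * expi b.
Proof. rewrite /expi; simpc. by rewrite cosD sinD [(sin a * _ + _)%R]addrC. Qed.

Lemma expi_neq0 a : expi a != 0.
Proof.
  apply/negP => /eqP [Hc Hs]. have := sin2_cos2 a. rewrite /Rsqr Hc Hs Rmult_0_l Rplus_0_l.
  by move/esym/R1_neq_R0.
Qed.

Lemma expi_rsum N d : expi (rsum N d) = \prod_(k < N) expi (d k).
Proof.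
  elim: N => [|N IH] /=; first by rewrite big_ord0 /expi cos_0 sin_0.
  by rewrite expiD IH big_ord_recr.
Qed.

Lemma rsumE N (g : nat -> R) : rsum N g = \sum_(k < N) g k.
Proof. elim: N => [|N IH]; first by rewrite big_ord0. by rewrite big_ord_recr /= IH. Qed.

Lemma rprodE N (g : nat -> R) : rprod N g = \prod_(k < N) g k.
Proof. elim: N => [|N IH]; first by rewrite big_ord0. by rewrite big_ord_recr /= IH. Qed.

Lemma Nat_eqbE m n : Nat.eqb m n = (m == n).
Proof. by case: PeanoNat.Nat.eqb_spec => [->|/eqP/negbTE]; rewrite ?eqxx. Qed.

Lemma expi_sub_mid {a b u v} :
  a = u + v -> b = u - v -> expi a - expi b = expi u * (2 * 'i) * (sin v)%:C.
Proof.
  move=> -> ->. rewrite !expiD -mulrBr -mulrA. congr (_ * _).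
  by rewrite /expi -RoppE cos_neg sin_neg; simpc; rewrite mulrDl mul1r.
Qed.

Lemma expi_add_mid {a b u v} :
  a = u + v -> b = u - v -> expi a + expi b = expi u * 2 * (cos v)%:C.
Proof.
  move=> -> ->. rewrite !expiD -mulrDr -mulrA. congr (_ * _).
  by rewrite /expi -RoppE cos_neg sin_neg; simpc; rewrite mulrDl mul1r.
Qed.

Lemma sum_mul_prod_fractions (F : fieldType) n (a c s : nat -> F) :
  (forall k, (k < n)%N -> s k != 0) ->
  (\sum_(j < n) a j * (c j / s j)) * \prod_(k < n) s k =
  \sum_(j < n) a j * \prod_(k < n) (if k == j :> nat then c k else s k).
Proof.
  move=> Hs. rewrite mulr_suml. apply: eq_bigr => j _.
  rewrite [\prod_(k < n) s k](bigD1 j) // [\prod_(k < n) (if _ then _ else _)](bigD1 j) //= eqxx.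
  rewrite [\prod_(k < n | k != j) (if _ then _ else _)](eq_bigr (fun k : 'I_n => s k)); last first.
    by move=> k; rewrite -val_eqE => /negbTE ->.
  field. exact: Hs.
Qed.

Lemma sum_prod_subst_s0_eq0 (F : comNzRingType) n (a c s : nat -> F) : s 0%N = 0 ->
  \sum_(j < n.+1) a j * \prod_(k < n.+1) (if k == j :> nat then c k else s k) =
  a 0%N * (c 0%N * \prod_(k < n) s k.+1).
Proof.
  move=> Hs0. rewrite big_ord_recl [X in _ + X]big1 ?addr0.
  - by rewrite big_ord_recl.
  - by move=> j _; rewrite big_ord_recl /= Hs0 mul0r mulr0.
Qed.

Definition cot_poly N (lam theta : nat -> R) : {poly R[i]} :=
  \sum_(j < N) (lam j)%:C *:
    \prod_(k < N) ('X - (if k == j then - expi (theta k) else expi (theta k))%:P).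

Lemma size_prod_XsubC_ord N (c : 'I_N -> R[i]) : size (\prod_(k < N) ('X - (c k)%:P)) = N.+1.
Proof. by rewrite size_prod_XsubC -[in RHS](card_ord N) cardE enumT. Qed.

Lemma size_cot_poly N lam theta : (size (cot_poly N lam theta) <= N.+1)%N.
Proof.
  apply: (big_ind (fun p : {poly R[i]} => (size p <= N.+1)%N)) => [|p q Hp Hq|j _].
  - by rewrite size_poly0.
  - by rewrite (leq_trans (size_polyD _ _)) // geq_max Hp Hq.
  - by rewrite (leq_trans (size_scale_leq _ _)) // size_prod_XsubC_ord.
Qed.

Lemma coef_prod_XsubC_ord N (c : 'I_N -> R[i]) : (\prod_(k < N) ('X - (c k)%:P))`_N = 1.
Proof.
  have /monicP := monic_prod_XsubC (index_enum 'I_N) xpredT c.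
  by rewrite lead_coefE size_prod_XsubC_ord.
Qed.

Lemma coef_cot_poly N lam theta : (cot_poly N lam theta)`_N = (rsum N lam)%:C.
Proof.
  rewrite coef_sum rsumE rmorph_sum. apply: eq_bigr => j _.
  by rewrite coefZ coef_prod_XsubC_ord mulr1.
Qed.

Lemma cot_poly_eval N lam theta th :
  'i * (cot_poly N lam theta).[expi th] =
  \prod_(k < N) (expi (midpoint th (theta k)) * (2 * 'i)) * (cot_numer N lam theta th)%:C.
Proof.
  rewrite /cot_poly /cot_numer rsumE horner_sum rmorph_sum !mulr_sumr. apply: eq_bigr => j _.
  rewrite hornerZ horner_prod rprodE rmorphM rmorph_prod mulrCA [RHS]mulrCA -big_split /=.
  congr (_ * _).
  rewrite (bigD1 j) // [RHS](bigD1 j) //= Nat_eqbE !eqxx mulrA.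
  congr (_ * _).
  - have [Ea Eb] := midpoint_split th (theta j).
    rewrite hornerXsubC opprK (expi_add_mid Ea Eb). ring.
  - apply: eq_bigr => k Hk. have [Ea Eb] := midpoint_split th (theta k).
    have Hkj : (k == j :> nat) = false by exact: negbTE Hk.
    by rewrite hornerXsubC Nat_eqbE (negbTE Hk) Hkj (expi_sub_mid Ea Eb).
Qed.

Lemma prod_XsubC_eval N (mu : nat -> R) th :
  (\prod_(k < N) ('X - (expi (mu k))%:P)).[expi th] =
  \prod_(k < N) (expi (midpoint th (mu k)) * (2 * 'i)) * (sin_prod N mu th)%:C.
Proof.
  rewrite horner_prod /sin_prod rprodE rmorph_prod -big_split /=. apply: eq_bigr => k _.
  have [Ea Eb] := midpoint_split th (mu k). by rewrite hornerXsubC (expi_sub_mid Ea Eb).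
Qed.

Lemma Ci_neq0 : ('i : R[i]) != 0.
Proof. by apply/eqP => [[]] /eqP; rewrite oner_eq0. Qed.

Lemma prod_midpoint_neq0 N (g : nat -> R) th :
  \prod_(k < N) (expi (midpoint th (g k)) * (2 * 'i)) != 0.
Proof. by apply/prodf_neq0 => k _; rewrite !mulf_eq0 !negb_or expi_neq0 Ci_neq0 pnatr_eq0. Qed.

Lemma cot_poly_factor {N lam theta} {mu : nat -> R} :
  rsum N lam != 0 ->
  (forall i j : 'I_N, expi (mu i) = expi (mu j) -> i = j) ->
  (forall j : 'I_N, cot_numer N lam theta (mu j) = 0) ->
  cot_poly N lam theta = (rsum N lam)%:C *: \prod_(k < N) ('X - (expi (mu k))%:P).
Proof.
  move=> Ht Hinj Hzero.
  set rs := [seq expi (mu i) | i : 'I_N <- enum 'I_N].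
  have Hsize : size (cot_poly N lam theta) = (size rs).+1.
  { rewrite size_map size_enum_ord. apply/eqP; rewrite eqn_leq size_cot_poly ltnNge /=.
    apply/negP => /leq_sizeP /(_ N (leqnn N)) /eqP.
    by rewrite coef_cot_poly fmorph_eq0 (negbTE Ht). }
  have Hroots : all (root (cot_poly N lam theta)) rs.
  { apply/allP => _ /mapP [i _ ->]. have := cot_poly_eval N lam theta (mu i).
    rewrite Hzero mulr0 => /eqP. by rewrite mulf_eq0 (negbTE Ci_neq0). }
  have Huniq : uniq_roots rs by rewrite uniq_rootsE map_inj_uniq ?enum_uniq // => i j /Hinj.
  rewrite [LHS](all_roots_prod_XsubC Hsize Hroots Huniq) lead_coefE Hsize size_map size_enum_ord.
  by rewrite coef_cot_poly big_map big_enum; congr (_ *: _); apply: eq_bigl.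
Qed.

Lemma prod_midpoint_shift N {theta mu d : nat -> R} {th} :
  (forall k, midpoint th (mu k) = d k + midpoint th (theta k)) ->
  \prod_(k < N) (expi (midpoint th (mu k)) * (2 * 'i)) =
  expi (rsum N d) * \prod_(k < N) (expi (midpoint th (theta k)) * (2 * 'i)).
Proof.
  move=> Hd. rewrite expi_rsum -big_split /=. apply: eq_bigr => k _.
  by rewrite Hd expiD -mulrA.
Qed.

Lemma cot_numer_scaled N lam theta (mu d : nat -> R) th :
  rsum N lam != 0 ->
  (forall i j : 'I_N, expi (mu i) = expi (mu j) -> i = j) ->
  (forall j : 'I_N, cot_numer N lam theta (mu j) = 0) ->
  (forall k, midpoint th (mu k) = d k + midpoint th (theta k)) ->
  (cot_numer N lam theta th)%:C = 'i * (rsum N lam)%:C * expi (rsum N d) * (sin_prod N mu th)%:C.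
Proof.
  move=> Ht Hinj Hzero Hd. apply: (mulfI (prod_midpoint_neq0 N theta th)).
  rewrite -cot_poly_eval (cot_poly_factor Ht Hinj Hzero) hornerZ prod_XsubC_eval.
  rewrite (prod_midpoint_shift N Hd). ring.
Qed.

Lemma real_eq_mulCi_expi (x t S p : R) :
  x%:C = 'i * t%:C * expi S * p%:C -> x = - (t * sin S * p) /\ t * cos S * p = 0.
Proof. by rewrite /expi; simpc => -[-> <-]. Qed.

End Algebra.

Lemma cot_numer_eq N lam theta th :
  (forall k, (k < N)%coq_nat -> sin ((th - theta k) / 2) <> 0) ->
  cot_numer N lam theta th = cot_sum N lam theta th * sin_prod N theta th.
Proof.
  move=> Hs. rewrite /cot_numer /cot_sum /sin_prod !rsumE rprodE.
  under eq_bigr do rewrite rprodE; under eq_bigr do under eq_bigr do rewrite Nat_eqbE.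
  symmetry. apply: (sum_mul_prod_fractions _ _ lam (fun k => cos ((th - theta k) / 2))
                      (fun k => sin ((th - theta k) / 2))).
  move=> k /ltP Hk. exact/eqP/Hs.
Qed.

Lemma cot_numer_at_first_pole N lam theta :
  cot_numer (S N) lam theta (theta 0%nat) =
  lam 0%nat * rprod N (fun k => sin ((theta 0%nat - theta (S k)) / 2)).
Proof.
  rewrite /cot_numer rsumE rprodE.
  under eq_bigr do rewrite rprodE; under eq_bigr do under eq_bigr do rewrite Nat_eqbE.
  rewrite (sum_prod_subst_s0_eq0 _ _ lam (fun k => cos ((theta 0%nat - theta k) / 2))
             (fun k => sin ((theta 0%nat - theta k) / 2))) /=.
  - by rewrite half_sub_diag cos_0 mul1r.
  - by rewrite half_sub_diag sin_0.
Qed.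

Lemma cot_numer_factor N lam theta mu t :
  t = rsum N lam -> t <> 0 ->
  (forall i j, (i < N)%coq_nat -> (j < N)%coq_nat ->
     cos (mu i) = cos (mu j) -> sin (mu i) = sin (mu j) -> i = j) ->
  (forall j, (j < N)%coq_nat -> cot_numer N lam theta (mu j) = 0) ->
  exists S, forall th,
    cot_numer N lam theta th = - (t * sin S * sin_prod N mu th) /\ t * cos S * sin_prod N mu th = 0.
Proof.
  move=> -> Ht Hinj Hzero. exists (rsum N (fun k => (mu k - theta k) / 2)) => th.
  apply: real_eq_mulCi_expi. apply: cot_numer_scaled.
  - exact/eqP.
  - move=> i j [Hc Hs]. apply: val_inj. apply: Hinj => //; exact/ltP/ltn_ord.
  - move=> j. apply: Hzero. exact/ltP.
  - move=> k. exact: midpoint_shift.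
Qed.

End CotangentPolynomial.

(** * The zeros determine the cotangent sum *)

Lemma sin_eq_1_of_signs m t psi x p :
  0 < t -> 0 < (-1) ^ m * x -> 0 < (-1) ^ S m * p ->
  x = - (t * sin psi * p) -> t * cos psi * p = 0 -> sin psi = 1.
Proof.
  intros Ht Hx Hp Ex Ep.
  assert (Hp0 : p <> 0) by (intro H0; rewrite H0, Rmult_0_r in Hp; lra).
  assert (Hcos : cos psi = 0).
  { destruct (Rmult_integral _ _ Ep) as [Htc|]; [|contradiction].
    destruct (Rmult_integral _ _ Htc); [lra | assumption]. }
  assert (Hpos : 0 < t * sin psi * ((-1) ^ S m * p)).
  { replace (t * sin psi * ((-1) ^ S m * p)) with ((-1) ^ m * x) by (rewrite Ex; simpl; ring).
    exact Hx. }
  assert (0 < t * sin psi) by (apply (Rmult_lt_reg_r _ _ _ Hp); rewrite Rmult_0_l; exact Hpos).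
  assert (0 < sin psi) by (apply (Rmult_lt_reg_l _ _ _ Ht); rewrite Rmult_0_r; assumption).
  pose proof (sin2_cos2 psi) as Hsc. rewrite Hcos in Hsc. unfold Rsqr in Hsc. nra.
Qed.

Lemma cot_numer_sign_at_first_pole m lam theta :
  0 < lam 0%nat ->
  (forall k, (0 < k <= m)%nat -> theta 0%nat < theta k < theta 0%nat + 2 * PI) ->
  0 < (-1) ^ m * cot_numer (S m) lam theta (theta 0%nat).
Proof.
  intros Hl Hw. rewrite CotangentPolynomial.cot_numer_at_first_pole.
  set (P := rprod m (fun k => sin ((theta 0%nat - theta (S k)) / 2))).
  assert (0 < (-1) ^ m * P).
  { apply rprod_neg_sign. intros k Hk. apply sin_half_sub_window_neg, Hw. lia. }
  replace ((-1) ^ m * (lam 0%nat * P)) with (lam 0%nat * ((-1) ^ m * P)) by ring.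
  apply Rmult_lt_0_compat; assumption.
Qed.

Lemma cot_sum_factorization N lam theta mu th :
  (1 <= N)%nat ->
  (forall j, (j < N)%nat -> 0 < lam j) ->
  (forall k, (0 < k < N)%nat -> theta 0%nat < theta k < theta 0%nat + 2 * PI) ->
  (forall j, (j < N)%nat -> theta 0%nat < mu j < theta 0%nat + 2 * PI) ->
  (forall i j, (i < N)%nat -> (j < N)%nat -> mu i = mu j -> i = j) ->
  (forall j k, (j < N)%nat -> (k < N)%nat -> sin ((mu j - theta k) / 2) <> 0) ->
  (forall j, (j < N)%nat -> cot_sum N lam theta (mu j) = 0) ->
  (forall k, (k < N)%nat -> sin ((th - theta k) / 2) <> 0) ->
  cot_sum N lam theta th = - (rsum N lam * sin_prod N mu th / sin_prod N theta th).
Proof.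
  intros HN Hlam Hthw Hmuw Hmuinj Hmup Hmuz Hth.
  assert (Ht : 0 < rsum N lam).
  { pose proof (rsum_ge_term N lam 0 (fun j Hj => Rlt_le _ _ (Hlam j Hj)) HN).
    pose proof (Hlam 0%nat HN). lra. }
  assert (Hnum0 : forall j, (j < N)%nat -> cot_numer N lam theta (mu j) = 0).
  { intros j Hj. rewrite CotangentPolynomial.cot_numer_eq, Hmuz by auto. ring. }
  assert (Hinj : forall i j, (i < N)%nat -> (j < N)%nat ->
            cos (mu i) = cos (mu j) -> sin (mu i) = sin (mu j) -> i = j).
  { intros i j Hi Hj Hc Hs. apply Hmuinj; auto.
    pose proof (Hmuw i Hi). pose proof (Hmuw j Hj).
    apply (eq_of_sin_half_sub_window _ _ (theta 0%nat)); [lra | lra |].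
    apply sin_half_sub_eq0; auto. }
  destruct (CotangentPolynomial.cot_numer_factor N lam theta mu _ eq_refl (Rgt_not_eq _ _ Ht)
              Hinj Hnum0) as [psi Hpsi].
  assert (Hsin : sin psi = 1).
  { destruct N as [|m]; [lia|]. destruct (Hpsi (theta 0%nat)) as [E1 E2].
    apply (sin_eq_1_of_signs m (rsum (S m) lam) psi (cot_numer (S m) lam theta (theta 0%nat))
             (sin_prod (S m) mu (theta 0%nat)) Ht); auto.
    - apply cot_numer_sign_at_first_pole; auto with arith. intros k Hk. apply Hthw. lia.
    - apply rprod_neg_sign. intros j Hj. apply sin_half_sub_window_neg, Hmuw, Hj. }
  destruct (Hpsi th) as [E _].
  rewrite CotangentPolynomial.cot_numer_eq, Hsin in E by auto.
  assert (sin_prod N theta th <> 0) by (apply rprod_neq0; auto).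
  apply (Rmult_eq_reg_r (sin_prod N theta th)); auto.
  rewrite E. field. auto.
Qed.

Theorem corollary6 (n : nat) (f : CC -> CC) (t : R)
    (N : nat) (lam theta mu : nat -> R) :
  extremal n f ->
  0 < t ->
  f (RtoC 0) = RtoC (exp (- t)) ->
  (1 <= N)%nat ->
  (N <= n)%nat ->
  (forall j, (j < N)%nat -> 0 < lam j) ->
  (forall i j, (i < N)%nat -> (j < N)%nat -> i <> j -> alpha theta i <> alpha theta j) ->
  (forall z : CC, Cmod z < 1 -> f z = cexp (logf N lam theta z)) ->
  (* representatives of the theta_j chosen in the window [theta_0, theta_0 + 2 pi) *)
  (forall j, (j < N)%nat -> theta 0%nat <= theta j < theta 0%nat + 2 * PI) ->
  (* mu_0, ..., mu_{N-1} are the (distinct) zeros of phi in that window *)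
  (forall j, (j < N)%nat -> theta 0%nat <= mu j < theta 0%nat + 2 * PI) ->
  (forall j, (j < N)%nat -> phi_is N lam theta (mu j) 0) ->
  (forall i j, (i < N)%nat -> (j < N)%nat -> mu i = mu j -> i = j) ->
  (forall th, theta 0%nat <= th < theta 0%nat + 2 * PI -> phi_is N lam theta th 0 ->
     exists j, (j < N)%nat /\ th = mu j) ->
  forall th : R,
    (forall j, (j < N)%nat -> cexp (Ci * RtoC th) <> cexp (Ci * RtoC (theta j))) ->
    phi_is N lam theta th
      (t * rprod N (fun j => sin ((th - mu j) / 2))
         / rprod N (fun j => sin ((th - theta j) / 2))).
Proof.
  intros _ _ Hf0 HN _ Hlam Halpha Hf Hthw Hmuw Hmuz Hmuinj _ th Hth.
  assert (Ht : t = rsum N lam) by exact (sum_weights_eq N lam theta f t Hf Hf0).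
  assert (Hmup : forall j k, (j < N)%nat -> (k < N)%nat -> sin ((mu j - theta k) / 2) <> 0).
  { intros j k Hj Hk Hs.
    exact (phi_undefined_at_pole N lam theta (mu j) k 0 Hk Hlam Hs (Hmuz j Hj)). }
  assert (Hmucot : forall j, (j < N)%nat -> cot_sum N lam theta (mu j) = 0).
  { intros j Hj.
    pose proof (phi_unique _ _ _ _ _ _ (phi_cot_sum N lam theta (mu j) (fun k Hk => Hmup j k Hj Hk))
                  (Hmuz j Hj)). lra. }
  assert (Hthp : forall k, (k < N)%nat -> sin ((th - theta k) / 2) <> 0).
  { intros k Hk Hs. exact (Hth k Hk (sin_half_sub_eq0_cexp _ _ Hs)). }
  assert (Hthw' : forall k, (0 < k < N)%nat -> theta 0%nat < theta k < theta 0%nat + 2 * PI).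
  { intros k Hk. specialize (Hthw k ltac:(lia)).
    assert (theta k <> theta 0%nat).
    { intros E. apply (Halpha k 0%nat); try lia. unfold alpha. rewrite E. reflexivity. }
    lra. }
  assert (Hmuw' : forall j, (j < N)%nat -> theta 0%nat < mu j < theta 0%nat + 2 * PI).
  { intros j Hj. specialize (Hmuw j Hj).
    assert (mu j <> theta 0%nat).
    { intros E. apply (Hmup j 0%nat Hj HN). rewrite E, half_sub_diag. apply sin_0. }
    lra. }
  replace (t * rprod N (fun j => sin ((th - mu j) / 2))
             / rprod N (fun j => sin ((th - theta j) / 2)))
    with (- cot_sum N lam theta th).
  - exact (phi_cot_sum N lam theta th Hthp).
  - rewrite (cot_sum_factorization N lam theta mu th), Ht by auto. unfold sin_prod, Rdiv. ring.
Qed.
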